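(* Let $n\ge 1$ and $m\ge 2$ be integers with $m\nmid n$, and let $k$ be a nonnegative integer. If $mk>n$, then $\theta_{m,k}=\mathbf{0}$, i.e. $\theta_{m,k}(x)=(0,\dots,0)$ for every $x\in\mathbb{F}_2^n$.
   Context: For $x=(x_0,\dots,x_{n-1})\in\mathbb{F}_2^n$, indices of coordinates are taken modulo $n$. For a nonnegative integer $k$, the map $\theta_{m,k}\colon\mathbb{F}_2^n\to\mathbb{F}_2^n$ is defined by $\theta_{m,k}(x)=y$ with $y_i=x_{i+mk}\prod_{1\le j\le mk-1,\ m\nmid j}(x_{i+j}+1)$ for $i\in\{0,\dots,n-1\}$ (for $k=0$ the empty product is $1$, so $\theta_{m,0}$ is the identity map). *)

From mathcomp Require Import all_boot.
Set Implicit Arguments. Unset Strict Implicit. Unset Printing Implicit Defensive.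

(* F_2 is modelled by bool: addition = xor (addb), multiplication = andb,
   and (a + 1) = ~~ a. A vector of F_2^n is an n.-tuple bool. *)

Definition coord (n : nat) (x : n.-tuple bool) (k : nat) : bool :=
  nth false x (k %% n).

Definition theta (n m k : nat) (x : n.-tuple bool) : n.-tuple bool :=
  [tuple of mkseq (fun i =>
     coord x (i + m * k) &&
     \big[andb/true]_(1 <= j < m * k | ~~ (m %| j)) (~~ coord x (i + j))) n].

From mathcomp Require Import all_boot.

(* For j := m k - n the shifted coordinate x_(i+j) coincides with x_(i+mk)
   (indices are read modulo n), while 1 <= j < m k and m does not divide j
   because it divides m k but not n.  Hence the product defining
   theta_(m,k)(x)_i contains the factor x_(i+mk) (x_(i+mk) + 1) = 0. *)

Lemma coordDr (n : nat) (x : n.-tuple bool) (a : nat) :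
  coord x (a + n) = coord x a.
Proof. by rewrite /coord modnDr. Qed.

Lemma nth_theta (n m k : nat) (x : n.-tuple bool) (i : nat) : i < n ->
  nth false (theta m k x) i =
  coord x (i + m * k) &&
  \big[andb/true]_(1 <= j < m * k | ~~ (m %| j)) (~~ coord x (i + j)).
Proof. by move=> lt_in; rewrite nth_mkseq. Qed.

Lemma nth_theta_eq0 (n m k : nat) (x : n.-tuple bool) (i j : nat) :
  0 < j < m * k -> ~~ (m %| j) -> coord x (i + j) = coord x (i + m * k) ->
  nth false (theta m k x) i = false.
Proof.
move=> j_range m_ndvd_j eq_coord.
have [lt_in | le_ni] := ltnP i n; last by rewrite nth_default ?size_tuple.
rewrite nth_theta // big_mkcond (bigD1_seq j) ?mem_index_iota ?iota_uniq //=.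
by rewrite m_ndvd_j eq_coord; case: coord.
Qed.

Lemma ndvdn_sub_mul (n m k : nat) :
  n <= m * k -> ~~ (m %| n) -> ~~ (m %| m * k - n).
Proof. by move=> le_n_mk; rewrite dvdn_subr ?dvdn_mulr. Qed.

Theorem lemma1 (n m k : nat) :
  1 <= n -> 2 <= m -> ~~ (m %| n) -> n < m * k ->
  forall x : n.-tuple bool, theta m k x = nseq_tuple n false.
Proof.
move=> n_gt0 _ m_ndvd_n lt_n_mk x.
apply/val_inj/(@eq_from_nth _ false) => [|i _]; first by rewrite !size_tuple.
rewrite [RHS]nth_nseq if_same.
apply: (@nth_theta_eq0 _ _ _ _ _ (m * k - n)).
- by rewrite subn_gt0 lt_n_mk ltn_subrL n_gt0 (leq_ltn_trans _ lt_n_mk).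
- exact: ndvdn_sub_mul (ltnW lt_n_mk) m_ndvd_n.
- by rewrite -coordDr -addnA subnK // ltnW.
Qed.
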